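(* In the Bernoulli Matching model with $k=2$ and reach $r=1$, \[ \sum_{n\ge 0}\mathbf{EL}^B_{n,2,1}\,a^n \text{ has asymptotics } \quad \mathbf{EL}^B_{n,2,1}=\frac{8}{11}n-\frac{32}{121}+O\!\left(n\,2^{-2n}\right)\quad (n\to\infty); \] in particular $\gamma^B_{2,1}=\lim_{n\to\infty}\mathbf{EL}^B_{n,2,1}/n=\frac{8}{11}$.
   Context: Let $(\epsilon_{ij})_{i,j\ge1}$ be independent random variables with $\Pr(\epsilon_{ij}=1)=\Pr(\epsilon_{ij}=0)=1/2$. For $n\ge1$ and an integer $r\ge1$, let $\mathbf{R}_{n,r}$ be the largest $m$ such that there exist indices $1\le i_1<\dots<i_m\le n$ and $1\le j_1<\dots<j_m\le n$ with $\epsilon_{i_aj_a}=1$ and $|i_a-j_a|\le r$ for all $a$. Define $\mathbf{EL}^B_{n,2,r}=\mathbb{E}\,\mathbf{R}_{n,r}$. *)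

From mathcomp Require Import all_boot all_order all_algebra.
Set Implicit Arguments. Unset Strict Implicit. Unset Printing Implicit Defensive.
Import Order.TTheory GRing.Theory Num.Theory.

(* Indices 1..n of the paper are represented by 'I_n (0-based, a harmless shift).
   A realisation of (eps_ij)_{i,j<=n} is a boolean matrix e (true = 1). *)
Definition config (n : nat) := {ffun 'I_n * 'I_n -> bool}.

Definition admissible n (r : nat) (e : config n) (p : 'I_n * 'I_n) : bool :=
  [&& e p, (p.1 <= p.2 + r)%N & (p.2 <= p.1 + r)%N].

Definition strictly_comparable n (p q : 'I_n * 'I_n) : bool :=
  ((p.1 < q.1)%N && (p.2 < q.2)%N) || ((q.1 < p.1)%N && (q.2 < p.2)%N).

Definition matching n r (e : config n) (S : {set 'I_n * 'I_n}) : bool :=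
  [forall p in S, admissible r e p] &&
  [forall p in S, forall q in S, (p != q) ==> strictly_comparable p q].

Definition Rnr n r (e : config n) : nat :=
  \max_(S : {set 'I_n * 'I_n} | matching r e S) #|S|.

Definition ELB (n r : nat) : rat :=
  (\sum_(e : config n) (Rnr r e)%:R) / (2 ^ (n * n))%:R.

From mathcomp Require Import all_boot all_order all_algebra.
From mathcomp Require Import zify ring lra.
Set Implicit Arguments. Unset Strict Implicit. Unset Printing Implicit Defensive.
Import Order.TTheory GRing.Theory Num.Theory.

(* Let L(i,j) be the largest admissible matching inside the box [0,i) x [0,j).
   It obeys the longest-common-subsequence recursion, and with reach 1 the
   boxes [0,i) x [0,i+2) and [0,i) x [0,i+1) contain the same admissible
   pairs.  Hence c_i = L(i,i), a_i = L(i,i+1) and b_i = L(i+1,i) evolve on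
   their own: a_i, b_i lie in {c_i, c_i + 1}, and the pair of indicators
   (a_i = c_i + 1, b_i = c_i + 1) is a Markov chain driven by the entries
   eps_ii, eps_i(i+1), eps_(i+1)i, which the chain has not read before.
   The diagonal c grows by one at each step, except in state (0,0) when
   eps_ii = 0, so E R_n = n - 1/2 sum_(k<n) P(state_k = (0,0)).  The
   probabilities of the states (0,0) and (1,1) satisfy an affine recursion
   whose linear part has complex eigenvalues of modulus 1/4; summing it gives
   8n/11 - 32/121 + O(4^-n). *)

Section BoxMatchings.
Variables n r : nat.
Notation T := ('I_n * 'I_n)%type.
Implicit Types (e : config n) (S : {set T}) (p q : T).

Lemma strictly_comparableC p q : strictly_comparable p q = strictly_comparable q p.
Proof. by rewrite /strictly_comparable orbC. Qed.

Lemma matchingP e S : reflect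
  ({in S, forall p, admissible r e p} /\
   {in S &, forall p q, p != q -> strictly_comparable p q})
  (matching r e S).
Proof.
apply: (iffP andP) => [[/forall_inP ha /forall_inP hc]|[ha hc]]; split => //.
- by move=> p q pS qS; move/forall_inP: (hc p pS) => /(_ q qS) /implyP.
- exact/forall_inP.
- apply/forall_inP => p pS; apply/forall_inP => q qS; apply/implyP; exact: hc.
Qed.

Lemma matching_sub e (A S : {set T}) : A \subset S -> matching r e S -> matching r e A.
Proof.
move=> /subsetP AS /matchingP[ha hc]; apply/matchingP; split.
- by move=> p /AS; apply: ha.
- by move=> p q /AS pS /AS qS; apply: hc.
Qed.

Lemma matching0 e : matching r e set0.
Proof. by apply/matchingP; split=> [p|p q]; rewrite in_set0. Qed.

Lemma matchingU1 e S q : admissible r e q ->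
  {in S, forall p, strictly_comparable q p} -> matching r e S -> matching r e (q |: S).
Proof.
move=> hq hqS /matchingP[ha hc]; apply/matchingP; split.
  by move=> p; rewrite in_setU1 => /predU1P[->|/ha].
move=> p p'; rewrite !in_setU1 => /predU1P[->|pS] /predU1P[->|p'S]; rewrite ?eqxx //.
- by move=> _; apply: hqS.
- by move=> _; rewrite strictly_comparableC; apply: hqS.
- exact: hc.
Qed.

Definition box (i j : nat) : {set T} := [set p : T | (p.1 < i) && (p.2 < j)].

Definition Lbox e i j : nat :=
  \max_(S | matching r e S && (S \subset box i j)) #|S|.

Lemma Lbox_ge e i j S : matching r e S -> S \subset box i j -> #|S| <= Lbox e i j.
Proof. by move=> hm hS; apply: (leq_bigmax_cond S); rewrite hm hS. Qed.

Lemma Lbox_le e i j m :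
  (forall S, matching r e S -> S \subset box i j -> #|S| <= m) -> Lbox e i j <= m.
Proof. by move=> h; apply/bigmax_leqP => S /andP[]; apply: h. Qed.

Lemma Lbox_witness e i j :
  exists S, [/\ matching r e S, S \subset box i j & Lbox e i j = #|S|].
Proof.
have [|S] := @eq_bigmax_cond _
  [pred S | matching r e S && (S \subset box i j)] (fun S => #|S|).
  by apply/card_gt0P; exists set0; rewrite inE matching0 sub0set.
by rewrite inE => /andP[hm hS] E; exists S; split=> //; exact: E.
Qed.

Lemma box_sub i j i' j' : i <= i' -> j <= j' -> box i j \subset box i' j'.
Proof.
move=> hi hj; apply/subsetP => p; rewrite !inE => /andP[h1 h2].
by rewrite (leq_trans h1 hi) (leq_trans h2 hj).
Qed.

Lemma Lbox_mono e i j i' j' : i <= i' -> j <= j' -> Lbox e i j <= Lbox e i' j'.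
Proof.
move=> hi hj; apply: Lbox_le => S hm hS.
by apply: Lbox_ge hm _; apply: subset_trans hS (box_sub hi hj).
Qed.

Lemma Lbox_empty e i j : box i j = set0 -> Lbox e i j = 0.
Proof.
move=> h0; apply/eqP; rewrite -leqn0; apply: Lbox_le => S _.
by rewrite h0 subset0 => /eqP->; rewrite cards0.
Qed.

Lemma box0l j : box 0 j = set0.
Proof. by apply/setP => p; rewrite !inE. Qed.

Lemma box0r i : box i 0 = set0.
Proof. by apply/setP => p; rewrite !inE andbF. Qed.

Lemma Lbox_eq_box e i j i' j' :
  (forall p, admissible r e p -> (p \in box i j) = (p \in box i' j')) ->
  Lbox e i j = Lbox e i' j'.
Proof.
move=> hb; apply: eq_bigl => S; apply: andb_id2l => /matchingP[ha _].
by apply/subsetP/subsetP => h p pS; move: (h p pS); rewrite hb //; apply: ha.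
Qed.

Lemma Lbox_ext e e' i j : {in box i j, e =1 e'} -> Lbox e i j = Lbox e' i j.
Proof.
move=> he; apply: eq_bigl => S; case hS: (S \subset box i j); rewrite ?andbF ?andbT //.
congr andb; apply: eq_forallb => p; apply: implyb_id2l => pS.
by rewrite /admissible he //; apply: (subsetP hS).
Qed.

Lemma Rnr_Lbox e : Rnr r e = Lbox e n n.
Proof.
apply: eq_bigl => S; suff -> : S \subset box n n by rewrite andbT.
by apply/subsetP => p _; rewrite inE !ltn_ord.
Qed.

(* Stated for natural indices; false when i or j is out of range. *)
Definition adm e (i j : nat) : bool :=
  [exists p : T, [&& p.1 == i :> nat, p.2 == j :> nat & admissible r e p]].

Lemma adm_ord e (x y : 'I_n) : adm e x y = admissible r e (x, y).
Proof.
apply/existsP/idP => [[[a b] /= /and3P[/eqP/val_inj-> /eqP/val_inj->]]//|hxy].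
by exists (x, y); rewrite !eqxx.
Qed.

Lemma row_col_corner e S i j p q : matching r e S -> S \subset box i.+1 j.+1 ->
  p \in S -> q \in S -> p.1 = i :> nat -> q.2 = j :> nat -> p = q.
Proof.
move=> /matchingP[_ hc] /subsetP hS pS qS p1 q2; apply/eqP/negPn/negP => npq.
move: (hc p q pS qS npq) (hS p pS) (hS q qS); rewrite /strictly_comparable !inE.
lia.
Qed.

Lemma setD1_corner_box e S q : matching r e S -> S \subset box q.1.+1 q.2.+1 ->
  q \in S -> S :\ q \subset box q.1 q.2.
Proof.
move=> /matchingP[_ hc] /subsetP hS qS; apply/subsetP => p /setD1P[npq pS].
move: (hc p q pS qS npq) (hS p pS); rewrite /strictly_comparable !inE.
lia.
Qed.

Lemma Lbox_corner e q : admissible r e q -> (Lbox e q.1 q.2).+1 <= Lbox e q.1.+1 q.2.+1.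
Proof.
move=> hq; have [S [hm /subsetP hS ->]] := Lbox_witness e q.1 q.2.
have qS : q \notin S by apply/negP => /hS; rewrite inE ltnn.
have := cardsU1 q S; rewrite qS add1n => <-; apply: Lbox_ge.
  apply: matchingU1 hm => // p /hS; rewrite inE /strictly_comparable => /andP[-> ->].
  by rewrite orbT.
apply/subsetP => p; rewrite in_setU1 => /predU1P[->|/hS]; rewrite !inE /=; lia.
Qed.

Lemma Lbox_SS_le e i j :
  Lbox e i.+1 j.+1 <= maxn (maxn (Lbox e i j.+1) (Lbox e i.+1 j)) (Lbox e i j + adm e i j).
Proof.
apply: Lbox_le => S hm hS; rewrite !leq_max.
have [hSi|/subsetPn[[x y] xyS xy_row]] := boolP (S \subset box i j.+1).
  by rewrite (Lbox_ge hm hSi).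
have [hSj|/subsetPn[[x' y'] x'y'S x'y'_col]] := boolP (S \subset box i.+1 j).
  by rewrite (Lbox_ge hm hSj) orbT.
have xi : x = i :> nat.
  by move: xy_row (subsetP hS _ xyS); rewrite !inE negb_and -!leqNgt /=; lia.
have y'j : y' = j :> nat.
  by move: x'y'_col (subsetP hS _ x'y'S); rewrite !inE negb_and -!leqNgt /=; lia.
case: (row_col_corner hm hS xyS x'y'S xi y'j) => ex ey; subst x' y' i j.
have -> : adm e x y by rewrite adm_ord; move/matchingP: hm => [/(_ _ xyS)].
rewrite (cardsD1 (x, y) S) xyS addn1 ltnS Lbox_ge ?orbT //.
  exact: matching_sub (subD1set S (x, y)) hm.
exact: (@setD1_corner_box _ _ (x, y) hm hS xyS).
Qed.

Lemma Lbox_rec e i j :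
  Lbox e i.+1 j.+1 = maxn (maxn (Lbox e i j.+1) (Lbox e i.+1 j)) (Lbox e i j + adm e i j).
Proof.
apply/eqP; rewrite eqn_leq Lbox_SS_le !geq_max !Lbox_mono //=.
have [/existsP[q /and3P[/eqP<- /eqP<- hq]]|_] := boolP (adm e i j).
  by rewrite addn1 Lbox_corner.
by rewrite addn0 Lbox_mono.
Qed.

Lemma Lbox_band_col e i j : i + r <= j -> Lbox e i j = Lbox e i (i + r).
Proof.
move=> hj; apply: Lbox_eq_box => p /and3P[_ _ h]; rewrite !inE.
by apply: andb_id2l => h1; lia.
Qed.

Lemma Lbox_band_row e i j : i + r <= j -> Lbox e j i = Lbox e (i + r) i.
Proof.
move=> hj; apply: Lbox_eq_box => p /and3P[_ h _]; rewrite !inE.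
by case: (ltnP p.2 i) => h2; rewrite ?andbT ?andbF //; lia.
Qed.

End BoxMatchings.

Arguments box {n}.

Definition next_state (s : bool * bool) (d u l : bool) : bool * bool :=
  if s.1 || s.2 then (u && s.1, l && s.2) else (u && ~~ d, l && ~~ d).

Section Chain.
Variable n : nat.
Implicit Types e : config n.

Definition cL e i := Lbox 1 e i i.
Definition aL e i := Lbox 1 e i i.+1.
Definition bL e i := Lbox 1 e i.+1 i.
Definition state e i := (aL e i == (cL e i).+1, bL e i == (cL e i).+1).

Lemma cL_rec e i : cL e i.+1 = maxn (maxn (aL e i) (bL e i)) (cL e i + adm 1 e i i).
Proof. exact: Lbox_rec. Qed.

Lemma aL_rec e i : aL e i.+1 = maxn (cL e i.+1) (aL e i + adm 1 e i i.+1).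
Proof.
rewrite /aL Lbox_rec (@Lbox_band_col _ _ _ i i.+2) ?addn1 // -/(aL e i) -/(cL e i.+1).
by rewrite cL_rec; lia.
Qed.

Lemma bL_rec e i : bL e i.+1 = maxn (cL e i.+1) (bL e i + adm 1 e i.+1 i).
Proof.
rewrite /bL Lbox_rec (@Lbox_band_row _ _ _ i i.+2) ?addn1 // -/(bL e i) -/(cL e i.+1).
by rewrite cL_rec; lia.
Qed.

Lemma aL_bL_gap e i : [&& cL e i <= aL e i <= (cL e i).+1 & cL e i <= bL e i <= (cL e i).+1].
Proof.
elim: i => [|i IH]; first by rewrite /cL /aL /bL !Lbox_empty ?box0l ?box0r.
move: IH; rewrite aL_rec bL_rec cL_rec; lia.
Qed.

Lemma cL_step e i : cL e i.+1 = cL e i + ((state e i != (false, false)) || adm 1 e i i).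
Proof.
have := aL_bL_gap e i.
by rewrite cL_rec /state xpair_eqE !eqbF_neg negb_and !negbK; lia.
Qed.

Lemma state_step e i :
  state e i.+1 = next_state (state e i) (adm 1 e i i) (adm 1 e i i.+1) (adm 1 e i.+1 i).
Proof.
have := aL_bL_gap e i; rewrite {1}/state aL_rec bL_rec cL_rec /next_state /state /=.
by case: ifP => ? ?; congr pair; lia.
Qed.

Definition past i : {set 'I_n * 'I_n} := box i i.+1 :|: box i.+1 i.

Lemma chain_ext e e' i : {in past i, e =1 e'} -> cL e i = cL e' i /\ state e i = state e' i.
Proof.
move=> he; have ext j k : box j k \subset past i -> Lbox 1 e j k = Lbox 1 e' j k.
  by move=> /subsetP sub; apply: Lbox_ext => p /sub; apply: he.
have hc : cL e i = cL e' i.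
  by apply: ext; apply: subset_trans (subsetUl _ _); apply: box_sub.
by rewrite /state /aL /bL -hc !ext ?subsetUl ?subsetUr.
Qed.

Lemma notin_past i (p : 'I_n * 'I_n) : i <= p.1 -> i <= p.2 -> p \notin past i.
Proof. by rewrite !inE; lia. Qed.

End Chain.

Local Open Scope ring_scope.

Section FreshCoordinates.
Variables (R : numFieldType) (X : finType).
Implicit Types (e : {ffun X -> bool}) (x : X) (b : bool).

Definition upd e x b : {ffun X -> bool} := [ffun y => if y == x then b else e y].

Lemma upd_same e x b : upd e x b x = b.
Proof. by rewrite ffunE eqxx. Qed.

Lemma upd_other e x b y : y != x -> upd e x b y = e y.
Proof. by rewrite ffunE => /negbTE->. Qed.

Lemma sum_upd (F : {ffun X -> bool} -> R) x :
  \sum_e F e = \sum_e (F (upd e x true) + F (upd e x false)) / 2.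
Proof.
pose flip e := upd e x (~~ e x).
have flipK : involutive flip.
  move=> e; apply/ffunP => y; rewrite /flip /upd !ffunE.
  by case: eqP => [->|]; rewrite ?eqxx ?negbK.
have pair_flip e : F e + F (flip e) = F (upd e x true) + F (upd e x false).
  have Ee : e = upd e x (e x) by apply/ffunP => y; rewrite /upd ffunE; case: eqP => [->|].
  by rewrite /flip {1}Ee; case: (e x); rewrite // addrC.
have sum_flip : \sum_e F e = \sum_e F (flip e) by rewrite (reindex_inj (inv_inj flipK)).
rewrite -big_distrl -(eq_bigr _ (fun e _ => pair_flip e)) big_split /= -sum_flip.
by field.
Qed.

Variables (S : finType) (st : {ffun X -> bool} -> S).

Lemma sum_by_stat (H : S -> R) :
  \sum_e H (st e) = \sum_s (\sum_e (st e == s)%:R) * H s.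
Proof.
under [RHS]eq_bigr do rewrite big_distrl /=.
rewrite exchange_big /=; apply: eq_bigr => e _.
rewrite (bigD1 (st e)) //= eqxx mul1r [X in _ + X]big1 ?addr0 // => s.
by rewrite eq_sym => /negbTE->; rewrite mul0r.
Qed.

Lemma sum_fresh1 x (G : S -> bool -> R) :
  (forall e b, st (upd e x b) = st e) ->
  \sum_e G (st e) (e x) = \sum_s (\sum_e (st e == s)%:R) * ((G s true + G s false) / 2).
Proof.
move=> inv; rewrite (sum_upd _ x) -sum_by_stat.
by apply: eq_bigr => e _; rewrite !inv !upd_same.
Qed.

Lemma sum_fresh3 x1 x2 x3 (G : S -> bool -> bool -> bool -> R) :
  x2 != x1 -> x3 != x1 -> x3 != x2 ->
  (forall e b, st (upd e x1 b) = st e) -> (forall e b, st (upd e x2 b) = st e) ->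
  (forall e b, st (upd e x3 b) = st e) ->
  \sum_e G (st e) (e x1) (e x2) (e x3) =
  \sum_s (\sum_e (st e == s)%:R) * ((\sum_b1 \sum_b2 \sum_b3 G s b1 b2 b3) / 8).
Proof.
move=> d21 d31 d32 inv1 inv2 inv3; rewrite -sum_by_stat.
rewrite (sum_upd _ x1); under eq_bigr do
  rewrite !inv1 !upd_same !(upd_other _ _ d21) !(upd_other _ _ d31).
rewrite [LHS](sum_upd _ x2); under eq_bigr do rewrite !inv2 !upd_same !(upd_other _ _ d32).
rewrite [LHS](sum_upd _ x3); under eq_bigr do rewrite !inv3 !upd_same.
by apply: eq_bigr => e _; rewrite !big_bool /=; field.
Qed.

End FreshCoordinates.

Lemma sum_bool2 (R : nmodType) (F : bool * bool -> R) :
  \sum_s F s = F (true, true) + F (true, false) + (F (false, true) + F (false, false)).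
Proof.
rewrite (eq_bigr (fun s => F (s.1, s.2))); last by case.
by rewrite -(pair_bigA _ (fun a b => F (a, b))) /= !big_bool.
Qed.

Definition trans (s t : bool * bool) : rat :=
  (\sum_d \sum_u \sum_l (next_state s d u l == t)%:R) / 8.

Fixpoint chain_prob k : rat * rat :=
  if k is k'.+1 then
    ((chain_prob k').1 / 8 - (chain_prob k').2 / 4 + 1 / 2,
     (chain_prob k').1 / 8 + (chain_prob k').2 / 4)
  else (1, 0).

Section ExpectedDiagonal.
Variable n : nat.
Implicit Types (e : config n) (s t : bool * bool).

Definition nconf : rat := (2 ^ (n * n))%:R.
Definition nstate i s : rat := \sum_(e : config n) (state e i == s)%:R.
Definition sumL i : rat := \sum_(e : config n) (cL e i)%:R.

Lemma sum_config1 : \sum_(e : config n) 1 = nconf.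
Proof. by rewrite sumr_const card_ffun card_prod !card_ord card_bool. Qed.

Lemma nstate_sum i : \sum_s nstate i s = nconf.
Proof.
rewrite -sum_config1 (sum_by_stat (fun e => state e i) (fun=> 1)).
by apply: eq_bigr => s _; rewrite mulr1.
Qed.

Lemma adm1_entry e i j (hi : (i < n)%N) (hj : (j < n)%N) :
  (i <= j.+1)%N -> (j <= i.+1)%N -> adm 1 e i j = e (Ordinal hi, Ordinal hj).
Proof.
move=> hij hji; rewrite (adm_ord 1 e (Ordinal hi) (Ordinal hj)) /admissible /=.
by rewrite !addn1 hij hji !andbT.
Qed.

Lemma state_upd e i (p : 'I_n * 'I_n) b :
  (i <= p.1)%N -> (i <= p.2)%N -> state (upd e p b) i = state e i.
Proof.
move=> h1 h2; apply: (chain_ext _).2 => q hq; rewrite upd_other //.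
by apply: contraTneq hq => ->; apply: notin_past.
Qed.

Lemma state0 e : state e 0 = (false, false).
Proof. by rewrite /state /cL /aL /bL !Lbox_empty ?box0l ?box0r. Qed.

Lemma sumL_step i : (i < n)%N -> sumL i.+1 = sumL i + nconf - nstate i (false, false) / 2.
Proof.
move=> hi; rewrite /sumL; under eq_bigr do rewrite cL_step natrD (adm1_entry _ hi hi) //.
rewrite big_split /= -addrA; congr (_ + _).
rewrite (sum_fresh1 (st := fun e => state e i) (fun s d => ((s != (false, false)) || d)%:R)).
  rewrite sum_bool2 -(nstate_sum i) sum_bool2 /nstate /=; lra.
by move=> e b; apply: state_upd.
Qed.

Lemma nstate_step i t : (i.+1 < n)%N -> nstate i.+1 t = \sum_s nstate i s * trans s t.
Proof.
move=> hi1; have hi := ltnW hi1; set x := Ordinal hi; set y := Ordinal hi1.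
have yx : y != x by rewrite -val_eqE /= gtn_eqF.
rewrite /nstate; under eq_bigr do
  rewrite state_step (adm1_entry _ hi hi) // (adm1_entry _ hi hi1 (leqW (leqnSn i)))
          // (adm1_entry _ hi1 hi (leqnn _) (leqW (leqnSn i))).
rewrite (sum_fresh3 (st := fun e => state e i) (fun s d u l => (next_state s d u l == t)%:R)) //.
- by rewrite xpair_eqE negb_and yx orbT.
- by rewrite xpair_eqE negb_and yx.
- by rewrite xpair_eqE negb_and yx.
all: by move=> e b; apply: state_upd.
Qed.

Lemma nstate_rec i : (i.+1 < n)%N ->
  nstate i.+1 (false, false) =
    nstate i (false, false) / 8 - nstate i (true, true) / 4 + nconf / 2 /\
  nstate i.+1 (true, true) = nstate i (false, false) / 8 + nstate i (true, true) / 4.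
Proof.
move=> hi1; have := nstate_sum i; rewrite !nstate_step // !sum_bool2 /trans !big_bool /=.
by split; lra.
Qed.

Lemma nstate_chain k : (k < n)%N ->
  nstate k (false, false) = nconf * (chain_prob k).1 /\
  nstate k (true, true) = nconf * (chain_prob k).2.
Proof.
elim: k => [_|k IH hk].
  rewrite /= mulr1 mulr0 -sum_config1 /nstate.
  by split; [apply: eq_bigr | apply: big1] => e _; rewrite state0.
have [h00 h11] := IH (ltnW hk); have [r00 r11] := nstate_rec hk.
by rewrite r00 r11 h00 h11 /=; split; field.
Qed.

Lemma sumL_chain k : (k <= n)%N ->
  sumL k = nconf * (k%:R - 1 / 2 * \sum_(j < k) (chain_prob j).1).
Proof.
elim: k => [_|k IH hk].
  by rewrite /sumL big1 ?big_ord0 ?mulr0 ?subr0 // => e _; rewrite /cL Lbox_empty ?box0l.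
rewrite sumL_step // IH ?(ltnW hk) // big_ord_recr /= (nstate_chain hk).1 -natr1.
by field.
Qed.

End ExpectedDiagonal.

Lemma ELB1_chain n : ELB n 1 = n%:R - 1 / 2 * \sum_(j < n) (chain_prob j).1.
Proof.
have -> : ELB n 1 = sumL n n / nconf n.
  by rewrite /ELB /sumL; congr (_ / _); apply: eq_bigr => e _; rewrite Rnr_Lbox.
by rewrite sumL_chain // mulrC mulKf // pnatr_eq0 expn_eq0.
Qed.

(* (6/11, 1/11) is the fixed point of the recursion defining chain_prob. *)
Definition chain_err k : rat :=
  (6 * ((chain_prob k).1 - 6 / 11) - 2 * ((chain_prob k).2 - 1 / 11)) / 11.

Lemma chain_sum_closed k :
  k%:R - 1 / 2 * \sum_(j < k) (chain_prob j).1 = 8 / 11 * k%:R - 32 / 121 + chain_err k.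
Proof.
elim: k => [|k IH]; first by rewrite big_ord0 /chain_err /=; lra.
by rewrite big_ord_recr /= -natr1; move: IH; rewrite /chain_err /=; lra.
Qed.

Lemma ELB1_closed n : ELB n 1 = 8 / 11 * n%:R - 32 / 121 + chain_err n.
Proof. by rewrite ELB1_chain chain_sum_closed. Qed.

(* The linear part (U, W) |-> (U/8 - W/4, U/8 + W/4) of the recursion has
   eigenvalues of modulus 1/4 and multiplies this form by exactly 1/16. *)
Lemma chain_invariant k :
  let U := (chain_prob k).1 - 6 / 11 in let W := (chain_prob k).2 - 1 / 11 in
  (U ^+ 2 + U * W + 2 * W ^+ 2) * (2 ^+ (2 * k)) ^+ 2 = 2 / 11.
Proof.
elim: k => [|k IH] /=; first by rewrite mul1r; lra.
by rewrite mulnS exprD -IH /=; field.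
Qed.

Lemma chain_err_bound k : `|chain_err k| <= 1 / 2 ^+ (2 * k).
Proof.
have := chain_invariant k => /=; rewrite /chain_err.
set U := (chain_prob k).1 - 6 / 11; set W := (chain_prob k).2 - 1 / 11.
set r : rat := 2 ^+ (2 * k) => inv.
have r_gt0 : 0 < r by rewrite exprn_gt0.
set a := U * r; set b := W * r.
have ab_inv : a ^+ 2 + a * b + 2 * b ^+ 2 = 2 / 11 by rewrite -inv /a /b; ring.
have : `|(6 * a - 2 * b) / 11| <= 1.
  have sq_le1 : ((6 * a - 2 * b) / 11) ^+ 2 <= 1 by nra.
  by rewrite ler_norml; apply/andP; split; nra.
have -> : (6 * a - 2 * b) / 11 = (6 * U - 2 * W) / 11 * r by rewrite /a /b; ring.
by rewrite normrM (gtr0_norm r_gt0) ler_pdivlMr.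
Qed.

Lemma ratio_cvg_of_bounded (R : archiFieldType) (f : nat -> R) (a B : R) :
  (forall n, `|f n - a * n%:R| <= B) ->
  forall eps, 0 < eps -> exists N, forall n, (N <= n)%N -> `|f n / n%:R - a| < eps.
Proof.
move=> hB eps eps_gt0; have B_ge0 : 0 <= B := le_trans (normr_ge0 _) (hB 0%N).
exists (Num.Def.archi_bound (B / eps)).+1 => n hn.
have n_gt0 : 0 < n%:R :> R by rewrite ltr0n (leq_trans _ hn).
have Bn : B < eps * n%:R.
  rewrite mulrC -ltr_pdivrMr //; apply: lt_le_trans (archi_boundP _) _.
    by rewrite divr_ge0 // ltW.
  by rewrite ler_nat ltnW.
have -> : f n / n%:R - a = (f n - a * n%:R) / n%:R by field; rewrite lt0r_neq0.
by rewrite normrM normfV (gtr0_norm n_gt0) ltr_pdivrMr //; apply: le_lt_trans (hB n) Bn.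
Qed.

Theorem mainTheorem3 :
  (exists (C : rat) (N : nat), forall n : nat, (N <= n)%N ->
     `| ELB n 1 - (8 / 11 * n%:R - 32 / 121) | <= C * n%:R / (2 ^+ (2 * n))) /\
  (forall eps : rat, 0 < eps -> exists N : nat, forall n : nat, (N <= n)%N ->
     `| ELB n 1 / n%:R - 8 / 11 | < eps).
Proof.
have pow_gt0 n : 0 < 2 ^+ (2 * n) :> rat by rewrite exprn_gt0.
split.
  exists 1, 1%N => n n_gt0; rewrite ELB1_closed addrC addKr mul1r.
  apply: le_trans (chain_err_bound n) _.
  by rewrite ler_pM2r ?invr_gt0 // ler1n.
apply: (ratio_cvg_of_bounded (f := fun n => ELB n 1) (B := 2)) => n /=.
have err_le1 : `|chain_err n| <= 1.
  by apply: le_trans (chain_err_bound n) _; rewrite ler_pdivrMr ?mul1r ?exprn_ege1.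
(* Generalized first: lra would otherwise unfold chain_err. *)
rewrite ELB1_closed; move: err_le1; move: (chain_err n) (8 / 11 * n%:R) => c x.
by rewrite !ler_norml => /andP[? ?]; apply/andP; split; lra.
Qed.
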